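(* (1) There exist a connected undirected unweighted graph $G=(V,E)$ and $\delta>0$ such that the set function $S\mapsto\operatorname{fp}(G^S,\delta)$ on subsets of $V$ is not submodular; moreover, such $G$ and $\delta$ exist also with the additional requirement that every node of $G$ has a self-loop. (2) There exists a connected undirected unweighted graph $G=(V,E)$ such that the set function $S\mapsto\operatorname{fp}^{\infty}(G^S)$ is not submodular.
   Context: Positional Voter model. A graph $G=(V,E,w)$ has node set $V$ with $|V|=n$, edge set $E\subseteq V\times V$ and weights $w\colon E\to\mathbb{R}_{>0}$; $\operatorname{in}(u)=\{v\in V:(v,u)\in E\}$. ''Undirected unweighted'' means $E$ is symmetric and $w\equiv 1$; ''self-loop at $u$'' means $(u,u)\in E$. A configuration is a set $X\subseteq V$ (the nodes carrying the novel trait $A$). Given a biased set $S\subseteq V$ and bias $\delta\ge 0$, define $f^S_X(v\mid u)=1+\delta$ if $v\in X$ and $u\in S$, and $1$ otherwise. The process $(\mathcal{X}_t)_{t\ge0}$: given $\mathcal{X}_t=X$, a node $u$ is chosen uniformly at random from $V$, then $v\in\operatorname{in}(u)$ is chosen with probability $\frac{f^S_X(v\mid u)\,w(v,u)}{\sum_{x\in\operatorname{in}(u)} f^S_X(x\mid u)\,w(x,u)}$, and $\mathcal{X}_{t+1}=X\cup\{u\}$ if $v\in X$, $\mathcal{X}_{t+1}=X\setminus\{u\}$ otherwise. Define $\operatorname{fp}(G^S,\delta,X)=\mathbb{P}[\exists t\ge0:\mathcal{X}_t=V\mid\mathcal{X}_0=X]$, $\operatorname{fp}(G^S,\delta)=\frac1n\sum_{u\in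 V}\operatorname{fp}(G^S,\delta,\{u\})$, and $\operatorname{fp}^{\infty}(G^S)=\lim_{\delta\to\infty}\operatorname{fp}(G^S,\delta)$. A set function $f$ on subsets of $V$ is submodular if $f(S_1)+f(S_2)\ge f(S_1\cup S_2)+f(S_1\cap S_2)$ for all $S_1,S_2\subseteq V$. *)

From HB Require Import structures.
From mathcomp Require Import all_boot all_order all_algebra.
From mathcomp Require Import all_classical all_reals all_analysis.
Set Implicit Arguments. Unset Strict Implicit. Unset Printing Implicit Defensive.
Import Order.TTheory GRing.Theory Num.Theory.
Import numFieldNormedType.Exports.
Local Open Scope ring_scope.

(* A graph on node type T : finType is an edge relation e : rel T,
   (v,u) \in E  <->  e v u.  Unweighted: w = 1 on every edge. *)
Definition undirected (T : finType) (e : rel T) : Prop := forall x y, e x y = e y x.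
Definition connected_graph (T : finType) (e : rel T) : Prop := forall x y, connect e x y.
Definition all_self_loops (T : finType) (e : rel T) : Prop := forall x, e x x.

Section PVM.
Variables (R : realType) (T : finType) (e : rel T).

Definition fbias (S : {set T}) (delta : R) (X : {set T}) (v u : T) : R :=
  if (v \in X) && (u \in S) then 1 + delta else 1.

Definition pick_prob (S : {set T}) (delta : R) (X : {set T}) (u v : T) : R :=
  (#|T|%:R)^-1 * (fbias S delta X v u /
     \sum_(x | e x u) fbias S delta X x u).

Definition next_conf (X : {set T}) (u v : T) : {set T} :=
  if v \in X then u |: X else X :\ u.

(* hit S delta t X = P[ exists s <= t, X_s = V | X_0 = X ] *)
Fixpoint hit (S : {set T}) (delta : R) (t : nat) (X : {set T}) : R :=
  match t with
  | 0 => (X == [set: T])%:R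
  | t'.+1 => if X == [set: T] then 1 else
      \sum_(u : T) \sum_(v | e v u) pick_prob S delta X u v * hit S delta t' (next_conf X u v)
  end.

Definition fp_from (S : {set T}) (delta : R) (X : {set T}) : R :=
  limn (fun t => hit S delta t X).

Definition fp (S : {set T}) (delta : R) : R :=
  (#|T|%:R)^-1 * \sum_(u : T) fp_from S delta [set u].

Definition fp_inf (S : {set T}) : R := lim ((fp S) @ +oo)%classic.

Definition fp_inf_exists (S : {set T}) : Prop := cvg ((fp S) @ +oo)%classic.
End PVM.

Definition submodular (T : finType) (R : realType) (f : {set T} -> R) : Prop :=
  forall S1 S2 : {set T}, f (S1 :|: S2) + f (S1 :&: S2) <= f S1 + f S2.

(* Fixation probabilities from a configuration X are the unique function with
   value 1 on V, value 0 on the empty set, and harmonic for the chain elsewhere: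
   the difference of two such functions attains its maximum on a configuration
   of maximal size, and an edge leaving that configuration (connectivity)
   propagates the maximum to a larger one.  On the triangle the six harmonic
   equations can then be solved exactly.  With self-loops and delta = 1 the
   solution gives fp({0,1}) + fp({}) > fp({0}) + fp({1}).  Without self-loops
   it is a rational function of r_u = 1 / (2 + delta [u \in S]) whose
   denominator stays positive as r_u -> 0, so fp^oo is its value at the limit
   point, and 4/7 + 1/3 > 4/9 + 4/9. *)

From Pilot Require Import Defs.
From HB Require Import structures.
From mathcomp Require Import all_boot all_order all_algebra.
From mathcomp Require Import all_classical all_reals all_analysis.
From mathcomp Require Import ring lra.
Import Order.TTheory GRing.Theory Num.Theory.
Import numFieldNormedType.Exports.
Local Open Scope ring_scope.
Set Implicit Arguments. Unset Strict Implicit. Unset Printing Implicit Defensive.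

(* [all_classical] shadows the finset empty set. *)
Local Notation set0 := finset.set0.

Lemma connected_crossing_edge (T : finType) (e : rel T) :
  undirected e -> connected_graph e -> forall X : {set T},
  X != set0 -> X != [set: T] -> exists u v, [/\ u \notin X, v \in X & e v u].
Proof.
move=> sym_e conn_e X /set0Pn[v vX] XT.
have /subsetPn[u _ uX] : ~~ ([set: T] \subset X) by rewrite finset.subTset.
have [/existsP[u' /existsP[v' /and3P[]]]|no_cross] :=
  boolP [exists u', exists v', [&& u' \notin X, v' \in X & e v' u']].
  by exists u', v'.
have connect_sym_e := sym_connect_sym sym_e.
suff : (v \in X) = (u \in X) by rewrite vX (negbTE uX).
apply: (closed_connect (a := [pred x | x \in X]) _ (conn_e v u)).
apply: (intro_closed connect_sym_e) => x y exy xX.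
apply: contraNT no_cross => yX; apply/existsP; exists y; apply/existsP; exists x.
by rewrite yX xX.
Qed.

Section FixationProbability.
Variables (R : realType) (T : finType) (e : rel T) (S : {set T}) (delta : R).
Hypotheses (delta_ge0 : 0 <= delta) (in_neighbour : forall u, exists v, e v u).
Hypotheses (sym_e : undirected e) (conn_e : connected_graph e).
Variable x0 : T.

Local Notation P := (pick_prob e S delta).
Local Notation hit := (hit e S delta).
Local Notation fp_from := (fp_from e S delta).

Lemma fbias_gt0 X v u : 0 < fbias S delta X v u.
Proof. by have := delta_ge0; rewrite /fbias; case: ifP => _; lra. Qed.

Lemma in_weight_gt0 X u : 0 < \sum_(x | e x u) fbias S delta X x u.
Proof.
have [v evu] := in_neighbour u.
rewrite (bigD1 v) //= ltr_pwDl ?fbias_gt0 //.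
by apply: sumr_ge0 => x _; exact/ltW/fbias_gt0.
Qed.

Lemma pick_prob_gt0 X u v : 0 < P X u v.
Proof.
rewrite /pick_prob mulr_gt0 ?divr_gt0 ?fbias_gt0 ?in_weight_gt0 //.
by rewrite invr_gt0 ltr0n; apply/card_gt0P; exists x0.
Qed.

Lemma pick_prob_ge0 X u v : 0 <= P X u v.
Proof. exact/ltW/pick_prob_gt0. Qed.

Lemma sum_pick_prob X : \sum_u \sum_(v | e v u) P X u v = 1.
Proof.
under eq_bigr => u _ do
  rewrite /pick_prob -mulr_sumr -mulr_suml mulfV ?mulr1 ?lt0r_neq0 ?in_weight_gt0 //.
rewrite sumr_const -[_ *+ _]mulr_natr mulVf // pnatr_eq0 -lt0n.
by apply/card_gt0P; exists x0.
Qed.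

Lemma next_conf_set0 (u v : T) : next_conf set0 u v = set0.
Proof. by rewrite /next_conf inE finset.set0D. Qed.

Lemma setT_neq0 : [set: T] != set0.
Proof. by apply/set0Pn; exists x0; rewrite inE. Qed.

Lemma hit_setT t : hit t [set: T] = 1.
Proof. by case: t => [|t] /=; rewrite eqxx. Qed.

Lemma hit_set0 t : hit t set0 = 0.
Proof.
elim: t => [|t IHt] /=; rewrite eq_sym (negbTE setT_neq0) //.
by rewrite big1 // => u _; rewrite big1 // => v _; rewrite next_conf_set0 IHt mulr0.
Qed.

Lemma hit_ge0_le1 t X : 0 <= hit t X <= 1.
Proof.
elim: t X => [|t IHt] X /=; first by case: (X == _); rewrite ?lexx ?ler01.
case: ifP => _; first by rewrite lexx ler01.
have hit_ge0 u v : 0 <= hit t (next_conf X u v) by case/andP: (IHt (next_conf X u v)).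
have hit_le1 u v : hit t (next_conf X u v) <= 1 by case/andP: (IHt (next_conf X u v)).
rewrite sumr_ge0 => [|u _]; last by rewrite sumr_ge0 // => v _; rewrite mulr_ge0 ?pick_prob_ge0.
rewrite -(sum_pick_prob X) ler_sum // => u _; rewrite ler_sum // => v _.
by rewrite ler_piMr ?pick_prob_ge0.
Qed.

Lemma hit_nondecreasing t X : hit t X <= hit t.+1 X.
Proof.
elim: t X => [|t IHt] X /=; case: ifP => // _.
  by rewrite sumr_ge0 // => u _; rewrite sumr_ge0 // => v _; rewrite mulr_ge0 ?pick_prob_ge0.
by rewrite ler_sum // => u _; rewrite ler_sum // => v _; rewrite ler_wpM2l ?pick_prob_ge0.
Qed.

Lemma hit_cvg X : ((fun t => hit t X) @ \oo --> fp_from X)%classic.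
Proof.
suff : cvgn (fun t => hit t X) by [].
apply/cvg_ex; eexists; apply: nondecreasing_cvgn.
  by apply/nondecreasing_seqP => t; exact: hit_nondecreasing.
by exists 1 => _ [t _ <-]; case/andP: (hit_ge0_le1 t X).
Qed.

Lemma fp_from_setT : fp_from [set: T] = 1.
Proof.
rewrite /Defs.fp_from (_ : (fun t => hit t _) = fun=> 1) ?lim_cst //.
by apply: funext => t; rewrite hit_setT.
Qed.

Lemma fp_from_set0 : fp_from set0 = 0.
Proof.
rewrite /Defs.fp_from (_ : (fun t => hit t _) = fun=> 0) ?lim_cst //.
by apply: funext => t; rewrite hit_set0.
Qed.

Definition pvm_harmonic (g : {set T} -> R) := forall X, X != [set: T] -> X != set0 ->
  g X = \sum_u \sum_(v | e v u) P X u v * g (next_conf X u v).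

Lemma fp_from_pvm_harmonic : pvm_harmonic fp_from.
Proof.
move=> X XT _.
have hit_succ_cvg : ((fun t => hit t.+1 X) @ \oo --> fp_from X)%classic.
  by rewrite (cvg_shiftS (fun t => hit t X)); exact: hit_cvg.
have hit_step_cvg : ((fun t => hit t.+1 X) @ \oo -->
    \sum_u \sum_(v | e v u) P X u v * fp_from (next_conf X u v))%classic.
  have -> : (fun t => hit t.+1 X) =
      (fun t => \sum_u \sum_(v | e v u) P X u v * hit t (next_conf X u v)).
    by apply: funext => t /=; rewrite (negbTE XT).
  apply: cvg_big => // [|u _]; first exact: add_continuous.
  apply: cvg_big => // [|v _]; first exact: add_continuous.
  by apply: cvgM; [exact: cvg_cst | exact: hit_cvg].
exact: cvg_unique _ hit_succ_cvg hit_step_cvg.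
Qed.

Lemma pvm_harmonicB f g : pvm_harmonic f -> pvm_harmonic g -> pvm_harmonic (fun X => f X - g X).
Proof.
move=> hf hg X XT X0; rewrite hf // hg // -sumrB; apply: eq_bigr => u _.
by rewrite -sumrB; apply: eq_bigr => v _; rewrite mulrBr.
Qed.

Lemma pvm_harmonic_argmax_next g Z u v : pvm_harmonic g -> Z != [set: T] -> Z != set0 ->
  (forall Y, g Y <= g Z) -> e v u -> g (next_conf Z u v) = g Z.
Proof.
move=> hg ZT Z0 Zmax evu.
have gap_ge0 w x : 0 <= P Z w x * (g Z - g (next_conf Z w x)).
  by rewrite mulr_ge0 ?pick_prob_ge0 // subr_ge0.
have : \sum_w \sum_(x | e x w) P Z w x * (g Z - g (next_conf Z w x)) = 0.
  have sum_gZ : \sum_w \sum_(x | e x w) P Z w x * g Z = g Z.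
    rewrite -[RHS]mul1r -(sum_pick_prob Z) mulr_suml.
    by apply: eq_bigr => w _; rewrite mulr_suml.
  transitivity (\sum_w \sum_(x | e x w) P Z w x * g Z -
                \sum_w \sum_(x | e x w) P Z w x * g (next_conf Z w x)).
    rewrite -sumrB; apply: eq_bigr => w _.
    by rewrite -sumrB; apply: eq_bigr => x _; rewrite mulrBr.
  by rewrite sum_gZ -hg // subrr.
move=> /(psumr_eq0P (fun w _ => sumr_ge0 _ (fun x _ => gap_ge0 w x)))/(_ u isT).
move=> /(psumr_eq0P (fun x _ => gap_ge0 u x))/(_ v evu)/eqP.
by rewrite mulf_eq0 gt_eqF ?pick_prob_gt0 //= subr_eq0 => /eqP.
Qed.

Lemma pvm_harmonic_le0 g : g [set: T] = 0 -> g set0 = 0 -> pvm_harmonic g -> forall X, g X <= 0.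
Proof.
move=> gT g0 hg X; rewrite leNgt; apply/negP => gX_gt0.
have [Y _ Ymax] := @arg_maxP _ R _ X xpredT g isT.
have [Z /eqP gZ Zbig] :=
  @arg_maxnP _ Y (fun Z => g Z == g Y) (fun Z => #|Z|) (eqxx _).
have gZ_gt0 : 0 < g Z by rewrite gZ (lt_le_trans gX_gt0 (Ymax X isT)).
have ZT : Z != [set: T] by apply: contraTneq gZ_gt0 => ->; rewrite gT ltxx.
have Z0 : Z != set0 by apply: contraTneq gZ_gt0 => ->; rewrite g0 ltxx.
have [u [v [uZ vZ evu]]] := connected_crossing_edge sym_e conn_e Z0 ZT.
have Zmax Y' : g Y' <= g Z by rewrite gZ; exact: Ymax.
have := pvm_harmonic_argmax_next hg ZT Z0 Zmax evu; rewrite /next_conf vZ gZ => /eqP/Zbig.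
by rewrite cardsU1 uZ /= add1n ltnn.
Qed.

Lemma fp_from_unique h : h [set: T] = 1 -> h set0 = 0 -> pvm_harmonic h ->
  forall X, fp_from X = h X.
Proof.
move=> hT h0 hh X; apply/eqP; rewrite eq_le -subr_le0 -[h X <= _]subr_le0.
apply/andP; split.
- apply: (pvm_harmonic_le0 (g := fun Y => fp_from Y - h Y)).
  + by rewrite fp_from_setT hT subrr.
  + by rewrite fp_from_set0 h0 subrr.
  + exact: pvm_harmonicB fp_from_pvm_harmonic hh.
- apply: (pvm_harmonic_le0 (g := fun Y => h Y - fp_from Y)).
  + by rewrite fp_from_setT hT subrr.
  + by rewrite fp_from_set0 h0 subrr.
  + exact: pvm_harmonicB hh fp_from_pvm_harmonic.
Qed.

End FixationProbability.

(* Polynomials are reified so that their continuity is proved once, by induction. *)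
Inductive pexpr :=
  | PVar of nat | PConst of nat
  | PAdd of pexpr & pexpr | PSub of pexpr & pexpr | PMul of pexpr & pexpr.

Declare Scope pexpr_scope.
Bind Scope pexpr_scope with pexpr.
Notation "a + b" := (PAdd a b) : pexpr_scope.
Notation "a - b" := (PSub a b) : pexpr_scope.
Notation "a * b" := (PMul a b) : pexpr_scope.
Definition pconst_of_uint (u : Number.uint) : pexpr := PConst (Nat.of_num_uint u).
Definition pconst_to_uint (p : pexpr) : option Number.uint :=
  if p is PConst n then Some (Nat.to_num_uint n) else None.
Number Notation pexpr pconst_of_uint pconst_to_uint : pexpr_scope.

Section PolynomialExpressions.
Variable R : realType.

Fixpoint peval (r : nat -> R) (p : pexpr) : R :=
  match p with
  | PVar i => r i
  | PConst n => n%:R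
  | PAdd p q => peval r p + peval r q
  | PSub p q => peval r p - peval r q
  | PMul p q => peval r p * peval r q
  end.

Lemma peval_cvg (U : Type) (F : set_system U) {FF : Filter F}
    (f : U -> nat -> R) (l : nat -> R) p :
  (forall i, (f x i @[x --> F] --> l i)%classic) ->
  (peval (f x) p @[x --> F] --> peval l p)%classic.
Proof.
move=> f_cvg; elim: p => /= [i|n|p IHp q IHq|p IHp q IHq|p IHp q IHq].
- exact: f_cvg.
- exact: cvg_cst.
- exact: cvgD.
- exact: cvgB.
- exact: cvgM.
Qed.

End PolynomialExpressions.

Definition o0 : 'I_3 := @Ordinal 3 0 isT.
Definition o1 : 'I_3 := @Ordinal 3 1 isT.
Definition o2 : 'I_3 := @Ordinal 3 2 isT.

Definition triangle : rel 'I_3 := fun v u => v != u.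
Definition looped_triangle : rel 'I_3 := fun _ _ => true.

Lemma ord3P (x : 'I_3) : [\/ x = o0, x = o1 | x = o2].
Proof.
case: x => [[|[|[|m]]] lt_x3] //.
- by apply: Or31; apply: val_inj.
- by apply: Or32; apply: val_inj.
- by apply: Or33; apply: val_inj.
Qed.

Lemma big_ord3 (V : nmodType) (F : 'I_3 -> V) : \sum_u F u = F o0 + F o1 + F o2.
Proof.
rewrite !big_ord_recl big_ord0 addr0 addrA.
by congr (F _ + F _ + F _); apply: val_inj.
Qed.

Lemma big_ord3_cond (V : nmodType) (Q : pred 'I_3) (F : 'I_3 -> V) :
  \sum_(u | Q u) F u =
  (if Q o0 then F o0 else 0) + (if Q o1 then F o1 else 0) + (if Q o2 then F o2 else 0).
Proof. by rewrite big_mkcond big_ord3. Qed.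

Lemma eq_setT_ord3 (X : {set 'I_3}) :
  (X == [set: 'I_3]) = [&& o0 \in X, o1 \in X & o2 \in X].
Proof.
apply/eqP/and3P => [->|[X0 X1 X2]]; first by rewrite !inE.
by apply/setP => x; rewrite inE; case: (ord3P x) => ->.
Qed.

Lemma eq_set0_ord3 (X : {set 'I_3}) :
  (X == set0) = ~~ [|| o0 \in X, o1 \in X | o2 \in X].
Proof.
apply/eqP/idP => [->|]; first by rewrite !inE.
rewrite !negb_or => /and3P[X0 X1 X2].
by apply/setP => x; rewrite inE; case: (ord3P x) => ->; exact/negbTE.
Qed.

Lemma in_next_conf (T : finType) (X : {set T}) u v w :
  (w \in next_conf X u v) = if v \in X then (w == u) || (w \in X) else (w != u) && (w \in X).
Proof. by rewrite /next_conf; case: (v \in X); rewrite !inE. Qed.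

Definition a_weight (R : realType) (S : {set 'I_3}) (delta : R) (u : 'I_3) : R :=
  if u \in S then 1 + delta else 1.

Lemma fbias_a_weight (R : realType) S (delta : R) X v u :
  fbias S delta X v u = if v \in X then a_weight S delta u else 1.
Proof. by rewrite /fbias /a_weight; case: (v \in X); case: (u \in S). Qed.

Section Triangle.
Variable R : realType.

(* The harmonic function of the triangle, found by solving its six linear
   equations in [r_u = 1 / (a_u + 1)]: the probability that a node [u] with one
   neighbour of each type copies the one without trait A.  [K3_num b0 b1 b2] is
   the numerator at the configuration with indicator bits [b0], [b1], [b2]. *)
Definition K3_den (r0 r1 r2 : pexpr) : pexpr :=
  9 + 6*r2 + r2*r2 + 6*r1 - 4*r1*r2 - 2*r1*r2*r2 + r1*r1 - 2*r1*r1*r2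
  + r1*r1*r2*r2 + 6*r0 - 4*r0*r2 - 2*r0*r2*r2 - 4*r0*r1 - 6*r0*r1*r2
  + 2*r0*r1*r2*r2 - 2*r0*r1*r1 + 2*r0*r1*r1*r2 + r0*r0 - 2*r0*r0*r2
  + r0*r0*r2*r2 - 2*r0*r0*r1 + 2*r0*r0*r1*r2 + r0*r0*r1*r1.

Definition K3_num (b0 b1 b2 : bool) (r0 r1 r2 : pexpr) : pexpr :=
  match b0, b1, b2 with
  | false, false, false => 0
  | true, false, false =>
      6 + 2*r2 + 2*r1 - 8*r1*r2 - 2*r1*r2*r2 - 2*r1*r1*r2 + 2*r1*r1*r2*r2
      + 2*r0 - 5*r0*r2 - r0*r2*r2 - 5*r0*r1 + 2*r0*r1*r2 + 5*r0*r1*r2*r2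
      - r0*r1*r1 + 5*r0*r1*r1*r2 - 2*r0*r1*r1*r2*r2 - r0*r0*r2 + r0*r0*r2*r2
      - r0*r0*r1 + 4*r0*r0*r1*r2 - 2*r0*r0*r1*r2*r2 + r0*r0*r1*r1
      - 2*r0*r0*r1*r1*r2
  | false, true, false =>
      6 + 2*r2 + 2*r1 - 5*r1*r2 - r1*r2*r2 - r1*r1*r2 + r1*r1*r2*r2 + 2*r0
      - 8*r0*r2 - 2*r0*r2*r2 - 5*r0*r1 + 2*r0*r1*r2 + 5*r0*r1*r2*r2 - r0*r1*r1
      + 4*r0*r1*r1*r2 - 2*r0*r1*r1*r2*r2 - 2*r0*r0*r2 + 2*r0*r0*r2*r2
      - r0*r0*r1 + 5*r0*r0*r1*r2 - 2*r0*r0*r1*r2*r2 + r0*r0*r1*r1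
      - 2*r0*r0*r1*r1*r2
  | true, true, false =>
      9 + 6*r2 + r2*r2 + 3*r1 - 8*r1*r2 - 3*r1*r2*r2 - 2*r1*r1*r2
      + 2*r1*r1*r2*r2 + 3*r0 - 8*r0*r2 - 3*r0*r2*r2 - 6*r0*r1 + 6*r0*r1*r2*r2
      - r0*r1*r1 + 5*r0*r1*r1*r2 - 2*r0*r1*r1*r2*r2 - 2*r0*r0*r2
      + 2*r0*r0*r2*r2 - r0*r0*r1 + 5*r0*r0*r1*r2 - 2*r0*r0*r1*r2*r2
      + r0*r0*r1*r1 - 2*r0*r0*r1*r1*r2
  | false, false, true =>
      6 + 2*r2 + 2*r1 - 5*r1*r2 - r1*r2*r2 - r1*r1*r2 + r1*r1*r2*r2 + 2*r0
      - 5*r0*r2 - r0*r2*r2 - 8*r0*r1 + 2*r0*r1*r2 + 4*r0*r1*r2*r2 - 2*r0*r1*r1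
      + 5*r0*r1*r1*r2 - 2*r0*r1*r1*r2*r2 - r0*r0*r2 + r0*r0*r2*r2 - 2*r0*r0*r1
      + 5*r0*r0*r1*r2 - 2*r0*r0*r1*r2*r2 + 2*r0*r0*r1*r1 - 2*r0*r0*r1*r1*r2
  | true, false, true =>
      9 + 3*r2 + 6*r1 - 8*r1*r2 - 2*r1*r2*r2 + r1*r1 - 3*r1*r1*r2
      + 2*r1*r1*r2*r2 + 3*r0 - 6*r0*r2 - r0*r2*r2 - 8*r0*r1 + 5*r0*r1*r2*r2
      - 3*r0*r1*r1 + 6*r0*r1*r1*r2 - 2*r0*r1*r1*r2*r2 - r0*r0*r2 + r0*r0*r2*r2
      - 2*r0*r0*r1 + 5*r0*r0*r1*r2 - 2*r0*r0*r1*r2*r2 + 2*r0*r0*r1*r1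
      - 2*r0*r0*r1*r1*r2
  | false, true, true =>
      9 + 3*r2 + 3*r1 - 6*r1*r2 - r1*r2*r2 - r1*r1*r2 + r1*r1*r2*r2 + 6*r0
      - 8*r0*r2 - 2*r0*r2*r2 - 8*r0*r1 + 5*r0*r1*r2*r2 - 2*r0*r1*r1
      + 5*r0*r1*r1*r2 - 2*r0*r1*r1*r2*r2 + r0*r0 - 3*r0*r0*r2 + 2*r0*r0*r2*r2
      - 3*r0*r0*r1 + 6*r0*r0*r1*r2 - 2*r0*r0*r1*r2*r2 + 2*r0*r0*r1*r1
      - 2*r0*r0*r1*r1*r2
  | true, true, true => K3_den r0 r1 r2
  end.

Definition peval3 (p : pexpr -> pexpr -> pexpr -> pexpr) (r : 'I_3 -> R) : R :=
  peval (nth 0 [:: r o0; r o1; r o2]) (p (PVar 0) (PVar 1) (PVar 2)).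

Definition triangle_hit (r : 'I_3 -> R) (X : {set 'I_3}) : R :=
  peval3 (K3_num (o0 \in X) (o1 \in X) (o2 \in X)) r / peval3 K3_den r.

Lemma triangle_hit_pvm_harmonic S (delta : R) (r : 'I_3 -> R) :
  (forall u, 0 < r u < 1) -> peval3 K3_den r != 0 ->
  (forall u, a_weight S delta u = (1 - r u) / r u) ->
  pvm_harmonic triangle S delta (triangle_hit r).
Proof.
move=> r01 den_neq0 weight_r X XT X0.
have /andP[r0_gt0 r0_lt1] := r01 o0; have /andP[r1_gt0 r1_lt1] := r01 o1.
have /andP[r2_gt0 r2_lt1] := r01 o2.
rewrite /triangle_hit /pick_prob card_ord big_ord3 !big_ord3_cond /=.
rewrite !fbias_a_weight !weight_r !in_next_conf /=.
move: XT X0 den_neq0; rewrite eq_setT_ord3 eq_set0_ord3 /peval3 /=.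
case: (o0 \in X); case: (o1 \in X); case: (o2 \in X) => //= _ _ den_neq0.
all: field; repeat (apply/andP; split); first [exact: den_neq0 | apply/eqP => ?; lra].
Qed.

Lemma triangle_hit_setT r : peval3 K3_den r != 0 -> triangle_hit r [set: 'I_3] = 1.
Proof. by move=> den_neq0; rewrite /triangle_hit !inE divff. Qed.

Lemma triangle_hit_set0 r : triangle_hit r set0 = 0.
Proof. by rewrite /triangle_hit !inE /peval3 /= mul0r. Qed.

Lemma K3_den_gt0 (r : 'I_3 -> R) : (forall u, 0 <= r u <= 1/2) -> 0 < peval3 K3_den r.
Proof.
move=> r_bd; rewrite /peval3 /=.
have /andP[r0_ge0 r0_le] := r_bd o0; have /andP[r1_ge0 r1_le] := r_bd o1.
have /andP[r2_ge0 r2_le] := r_bd o2.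
have r01 : 0 <= r o0 * r o1 <= 1/4 by apply/andP; split; nra.
have r02 : 0 <= r o0 * r o2 <= 1/4 by apply/andP; split; nra.
have r12 : 0 <= r o1 * r o2 <= 1/4 by apply/andP; split; nra.
nra.
Qed.

Definition copyB (S : {set 'I_3}) (delta : R) (u : 'I_3) : R := (a_weight S delta u + 1)^-1.

Lemma copyB_gt0_le_half S delta u : 0 <= delta -> 0 < copyB S delta u <= 1/2.
Proof.
move=> delta_ge0; have weight_ge1 : 1 <= a_weight S delta u.
  by rewrite /a_weight; case: ifP => _; lra.
rewrite /copyB invr_gt0 -[1/2]invf_div divr1 lef_pV2 ?posrE; lra.
Qed.

Lemma a_weight_copyB S delta u : 0 <= delta ->
  a_weight S delta u = (1 - copyB S delta u) / copyB S delta u.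
Proof.
move=> delta_ge0; have weight_ge1 : 1 <= a_weight S delta u.
  by rewrite /a_weight; case: ifP => _; lra.
by rewrite /copyB; field; repeat (apply/andP; split); apply/eqP; lra.
Qed.

Definition triangle_fp (r : 'I_3 -> R) : R :=
  (peval3 (K3_num true false false) r + peval3 (K3_num false true false) r
   + peval3 (K3_num false false true) r) / (3 * peval3 K3_den r).

Lemma triangle_in_neighbour u : exists v, triangle v u.
Proof. by case: (ord3P u) => ->; [exists o1 | exists o0 | exists o0]. Qed.

Lemma triangle_undirected : undirected triangle.
Proof. by move=> x y; rewrite /triangle eq_sym. Qed.

Lemma triangle_connected : connected_graph triangle.
Proof. by move=> x y; case: (eqVneq x y) => [->|neq_xy]; [exact: connect0 | exact: connect1]. Qed.

Lemma fp_triangle S delta : 0 <= delta -> fp triangle S delta = triangle_fp (copyB S delta).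
Proof.
move=> delta_ge0; set r := copyB S delta.
have r_bd u : 0 < r u <= 1/2 := copyB_gt0_le_half S u delta_ge0.
have den_gt0 : 0 < peval3 K3_den r.
  by apply: K3_den_gt0 => u; have := r_bd u; move=> /andP[*]; apply/andP; split; lra.
have hit_harmonic : pvm_harmonic triangle S delta (triangle_hit r).
  apply: triangle_hit_pvm_harmonic; last by move=> u; exact: a_weight_copyB.
  - by move=> u; have := r_bd u; move=> /andP[*]; apply/andP; split; lra.
  - exact: lt0r_neq0.
have fp_from_eq := fp_from_unique delta_ge0 triangle_in_neighbour triangle_undirected
  triangle_connected o0 (triangle_hit_setT (lt0r_neq0 den_gt0)) (triangle_hit_set0 r) hit_harmonic.
rewrite /fp card_ord big_ord3 !fp_from_eq /triangle_fp /triangle_hit !inE /=.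
by field; repeat (apply/andP; split); first [exact: lt0r_neq0 | apply/eqP; lra].
Qed.

End Triangle.

Section TriangleLimit.
Variable R : realType.

Lemma peval3_cvg (U : Type) (F : set_system U) {FF : Filter F}
    (f : U -> 'I_3 -> R) (l : 'I_3 -> R) p :
  (forall u, (f x u @[x --> F] --> l u)%classic) ->
  (peval3 p (f x) @[x --> F] --> peval3 p l)%classic.
Proof.
move=> f_cvg; apply: peval_cvg => -[|[|[|i]]] /=; try exact: f_cvg.
exact: cvg_cst.
Qed.

Lemma triangle_fp_cvg (f : R -> 'I_3 -> R) (l : 'I_3 -> R) :
  (forall u, (f x u @[x --> +oo] --> l u)%classic) -> (forall u, 0 <= l u <= 1/2) ->
  (triangle_fp (f x) @[x --> +oo] --> triangle_fp l)%classic.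
Proof.
move=> f_cvg l_bd; apply: cvgM; first by apply: cvgD; [apply: cvgD|]; exact: peval3_cvg.
apply: cvgV; first by rewrite mulf_neq0 // lt0r_neq0 // K3_den_gt0.
by apply: cvgM; [exact: cvg_cst | exact: peval3_cvg].
Qed.

Definition copyB_lim (S : {set 'I_3}) (u : 'I_3) : R := if u \in S then 0 else 1/2.

Lemma copyB_cvg S u : (copyB S delta u @[delta --> +oo] --> copyB_lim S u)%classic.
Proof.
rewrite /copyB /a_weight /copyB_lim; case: (u \in S).
  apply/gtr0_cvgV0.
    near=> delta; suff : 0 <= delta by lra.
    by near: delta; exact: nbhs_pinfty_ge.
  apply/cvgryPge => A; near=> delta; suff : A - 2 <= delta by lra.
  by near: delta; apply: nbhs_pinfty_ge; exact: num_real.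
have -> : (fun delta : R => (1 + 1)^-1) = fun=> 1/2 :> R by apply: funext => _; field.
exact: cvg_cst.
Unshelve. all: by end_near.
Qed.

Lemma fp_triangle_cvg S :
  (fp triangle S delta @[delta --> +oo] --> triangle_fp (copyB_lim S))%classic.
Proof.
have lim_bd u : 0 <= copyB_lim S u <= 1/2.
  by rewrite /copyB_lim; case: ifP => _; apply/andP; split; lra.
have := triangle_fp_cvg (fun u => @copyB_cvg S u) lim_bd.
apply: cvg_trans; apply: near_eq_cvg; near=> delta; rewrite fp_triangle //.
Unshelve. all: by end_near.
Qed.

Lemma fp_inf_triangle_exists S : fp_inf_exists R triangle S.
Proof. by apply/cvg_ex; eexists; exact: fp_triangle_cvg. Qed.

Lemma fp_inf_triangle S : fp_inf R triangle S = triangle_fp (copyB_lim S).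
Proof. exact/cvg_lim/fp_triangle_cvg/Rhausdorff. Qed.

End TriangleLimit.

Section LoopedTriangle.
Variable R : realType.

(* The harmonic function of the looped triangle for [delta = 1] and
   [o2 \notin S], found by solving its linear system; [s0], [s1] say whether
   [o0], [o1] are biased. *)
Definition looped_hit (s0 s1 b0 b1 b2 : bool) : R :=
  let table := match s0, s1 with
    | false, false => [:: 1/3; 1/3; 2/3; 1/3; 2/3; 2/3]
    | true, false => [:: 3704/8741; 3582/8741; 6482/8741; 3582/8741; 6482/8741; 6396/8741]
    | false, true => [:: 3582/8741; 3704/8741; 6482/8741; 3582/8741; 6396/8741; 6482/8741]
    | true, true => [:: 155/307; 155/307; 250/307; 147/307; 245/307; 245/307]
    end in
  (0 :: rcons table 1)`_(b0 + 2 * b1 + 4 * b2).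
Arguments looped_hit : simpl never.

Lemma looped_hit_pvm_harmonic (S : {set 'I_3}) : o2 \notin S ->
  pvm_harmonic looped_triangle S 1
    (fun X => looped_hit (o0 \in S) (o1 \in S) (o0 \in X) (o1 \in X) (o2 \in X)).
Proof.
move=> o2S X XT X0.
rewrite /pick_prob card_ord big_ord3 !big_ord3_cond /=.
rewrite !fbias_a_weight /a_weight (negbTE o2S) !in_next_conf /=.
move: XT X0; rewrite eq_setT_ord3 eq_set0_ord3.
case: (o0 \in S); case: (o1 \in S); case: (o0 \in X); case: (o1 \in X); case: (o2 \in X) => //= _ _.
all: by rewrite /looped_hit /=; field.
Qed.

Lemma looped_triangle_in_neighbour u : exists v, looped_triangle v u.
Proof. by exists u. Qed.

Lemma looped_triangle_undirected : undirected looped_triangle.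
Proof. by []. Qed.

Lemma looped_triangle_connected : connected_graph looped_triangle.
Proof. by move=> x y; exact: connect1. Qed.

Lemma fp_looped_triangle (S : {set 'I_3}) : o2 \notin S ->
  fp looped_triangle S 1 = (looped_hit (o0 \in S) (o1 \in S) true false false
    + looped_hit (o0 \in S) (o1 \in S) false true false
    + looped_hit (o0 \in S) (o1 \in S) false false true) / 3.
Proof.
move=> o2S.
have fp_from_eq X : fp_from looped_triangle S 1 X =
    looped_hit (o0 \in S) (o1 \in S) (o0 \in X) (o1 \in X) (o2 \in X).
  apply: (fp_from_unique ler01 looped_triangle_in_neighbour looped_triangle_undirected
    looped_triangle_connected o0 _ _ (looped_hit_pvm_harmonic o2S));
  by rewrite !inE /looped_hit /=; case: (o0 \in S); case: (o1 \in S).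
by rewrite /fp card_ord big_ord3 !fp_from_eq !inE mulrC.
Qed.

Lemma fp_looped_triangle_not_submodular :
  ~ submodular (fun S => fp looped_triangle S (1 : R)).
Proof.
move/(_ [set o0] [set o1]).
by rewrite !fp_looped_triangle ?inE //= /looped_hit /=; lra.
Qed.

End LoopedTriangle.

Lemma fp_inf_triangle_values (R : realType) :
  [/\ fp_inf R triangle ([set o0] :|: [set o1]) = 4/7,
      fp_inf R triangle ([set o0] :&: [set o1]) = 1/3,
      fp_inf R triangle [set o0] = 4/9 & fp_inf R triangle [set o1] = 4/9].
Proof. by rewrite !fp_inf_triangle /triangle_fp /peval3 /copyB_lim /= !inE /=; split; field. Qed.

Lemma fp_inf_triangle_not_submodular (R : realType) : ~ submodular (fp_inf R triangle).
Proof.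
move/(_ [set o0] [set o1]).
by case: (fp_inf_triangle_values R) => -> -> -> ->; lra.
Qed.

Theorem theorem3 (R : realType) :
  (exists (T : finType) (e : rel T), undirected e /\ connected_graph e /\
     exists delta : R, 0 < delta /\ ~ submodular (fun S => fp e S delta))
  /\
  (exists (T : finType) (e : rel T), undirected e /\ connected_graph e /\
     all_self_loops e /\
     exists delta : R, 0 < delta /\ ~ submodular (fun S => fp e S delta))
  /\
  (exists (T : finType) (e : rel T), undirected e /\ connected_graph e /\
     (forall S : {set T}, fp_inf_exists R e S) /\
     ~ submodular (fun S => fp_inf R e S)).
Proof.
have looped_witness :
    exists delta : R, 0 < delta /\ ~ submodular (fun S => fp looped_triangle S delta).
  by exists 1; split; [exact: ltr01 | exact: fp_looped_triangle_not_submodular].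
split; [|split].
- exists _, looped_triangle; split; first exact: looped_triangle_undirected.
  by split; first exact: looped_triangle_connected.
- exists _, looped_triangle; split; first exact: looped_triangle_undirected.
  split; first exact: looped_triangle_connected.
  by split; first by [].
- exists _, triangle; split; first exact: triangle_undirected.
  split; first exact: triangle_connected.
  by split; [exact: fp_inf_triangle_exists | exact: fp_inf_triangle_not_submodular].
Qed.
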